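(* For every $\bar\alpha\in V$ and every positive integer $L$, $\bar M(\bar\alpha)\le\bar M(\bar\alpha^L)$.
   Context: For a non-zero algebraic number $\gamma$ with minimal polynomial $A\prod_{n=1}^N(x-\gamma_n)$ over $\mathbb Z$ (primitive, $A>0$), $M(\gamma)=A\prod_{n=1}^N\max\{1,|\gamma_n|\}$. $V=\overline{\mathbb Q}^\times/\mathrm{Tor}(\overline{\mathbb Q}^\times)$ with quotient map $\pi$. $\bar M(\beta)=\inf\{M(\zeta\beta):\zeta\text{ a root of unity}\}$, which is well-defined on $V$; for $\bar\beta\in V$, $\bar M(\bar\beta)=\inf\{M(\beta):\beta\in\pi^{-1}(\bar\beta)\}$. *)

(* algebraic numbers are modelled by algC. *)
From HB Require Import structures.
From mathcomp Require Import all_boot all_order all_algebra all_field.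
From Stdlib Require Import ClassicalEpsilon.
Set Implicit Arguments. Unset Strict Implicit. Unset Printing Implicit Defensive.
Import Order.TTheory GRing.Theory Num.Theory.
Local Open Scope ring_scope.

(* p is the minimal polynomial of gamma over Z: nonzero, gamma is a root,
   of minimal degree among nonzero integer polynomials vanishing at gamma,
   primitive with positive leading coefficient (zcontents p = 1 means
   gcd of coefficients is 1 and the sign of the leading coefficient is +). *)
Definition is_minpolyZ (gamma : algC) (p : {poly int}) : Prop :=
  [/\ p != 0, root (map_poly intr p) gamma, zcontents p = 1
    & forall q : {poly int}, q != 0 -> root (map_poly intr q) gamma ->
        (size p <= size q)%N].

Definition minpolyZ (gamma : algC) : {poly int} :=
  epsilon (inhabits 0) (is_minpolyZ gamma).

Definition rootsZ (p : {poly int}) : seq algC :=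
  sval (closed_field_poly_normal (map_poly intr p : {poly algC})).

Definition mahlerZ (p : {poly int}) : algC :=
  (lead_coef p)%:~R * \prod_(z <- rootsZ p) Num.max 1 `|z|.

Definition M (gamma : algC) : algC := mahlerZ (minpolyZ gamma).

Definition root_of_unity (z : algC) : Prop :=
  exists n : nat, (0 < n)%N /\ z ^+ n = 1.

(* Mbar(a) <= Mbar(b), where Mbar(x) = inf { M(zeta x) : zeta root of unity },
   written out via the definition of infimum (the inf is of a set of reals
   bounded below by 1):  every M(zeta' b) is >= inf_zeta M(zeta a). *)
Definition Mbar_le (a b : algC) : Prop :=
  forall zeta', root_of_unity zeta' ->
  forall eps : algC, 0 < eps ->
  exists zeta, root_of_unity zeta /\ M (zeta * a) < M (zeta' * b) + eps.

(* If p is the minimal polynomial of g and q that of g^L, then q(X^L) vanishes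
   at g, so by Gauss's lemma q(X^L) = p * s in Z[X].  The Mahler measure is
   multiplicative, the cofactor s has measure at least its leading coefficient,
   a positive integer, and q(X^L) has the same measure as q, because the L
   roots z of z^L = d satisfy max(1,|z|)^L = max(1,|d|).  Given a root of unity z', any L-th root z of z' is again a
   root of unity and M(z a) <= M((z a)^L) = M(z' a^L). *)
From mathcomp Require Import all_boot all_order all_algebra all_field.
From mathcomp Require Import ring.
From Stdlib Require Import Classical ClassicalEpsilon Wf_nat.
Import Order.TTheory GRing.Theory Num.Theory.
Set Implicit Arguments.
Unset Strict Implicit.
Unset Printing Implicit Defensive.
Local Open Scope ring_scope.

Section MaxOneNorm.
Variable C : numClosedFieldType.
Implicit Types (z d : C) (r : seq C).

Lemma max1_norm_ge1 z : 1 <= Num.max 1 `|z|.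
Proof. by rewrite /Num.max; case: ifP => // /ltW. Qed.

Lemma max1_norm_ge0 z : 0 <= Num.max 1 `|z|.
Proof. exact: le_trans ler01 (max1_norm_ge1 z). Qed.

Lemma prod_max1_norm_ge1 r : 1 <= \prod_(z <- r) Num.max 1 `|z|.
Proof. by elim/big_ind: _ => // *; [exact: mulr_ege1 | exact: max1_norm_ge1]. Qed.

Lemma max1_normX z L : (0 < L)%N -> Num.max 1 `|z| ^+ L = Num.max 1 `|z ^+ L|.
Proof.
by move=> L_gt0; rewrite /Num.max normrX expr_gt1 //; case: ifP; rewrite ?expr1n.
Qed.

Lemma prod_max1_norm_XnsubC L d r : (0 < L)%N ->
  'X^L - d%:P = \prod_(z <- r) ('X - z%:P) ->
  \prod_(z <- r) Num.max 1 `|z| = Num.max 1 `|d|.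
Proof.
move=> L_gt0 Er.
have size_r : size r = L.
  have := congr1 (fun p : {poly C} => size p) Er.
  by rewrite size_XnsubC // size_prod_XsubC => -[].
have root_max1 z : z \in r -> Num.max 1 `|z| = L.-root (Num.max 1 `|d|).
  have : root ('X^L - d%:P) z -> z ^+ L = d.
    by rewrite rootE !hornerE subr_eq0 => /eqP.
  rewrite Er root_prod_XsubC => /[apply] <-.
  by rewrite -max1_normX // exprCK // max1_norm_ge0.
by rewrite (eq_big_seq _ root_max1) big_const_seq count_predT iter_mulr_1
  size_r rootCK.
Qed.

Definition rootsXnsubC L d : seq C :=
  sval (closed_field_poly_normal ('X^L - d%:P)).

Lemma rootsXnsubC_factor L d : (0 < L)%N ->
  'X^L - d%:P = \prod_(z <- rootsXnsubC L d) ('X - z%:P).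
Proof.
move=> L_gt0; rewrite /rootsXnsubC; case: closed_field_poly_normal => r /= {1}->.
by rewrite (monicP (monicXnsubC _ L_gt0)) scale1r.
Qed.

End MaxOneNorm.

Lemma lead_coef_comp_Xn (R : idomainType) (q : {poly R}) (L : nat) : (0 < L)%N ->
  lead_coef (q \Po 'X^L) = lead_coef q.
Proof.
by move=> L_gt0; rewrite lead_coef_comp ?size_polyXn ?ltnS // lead_coefXn expr1n mulr1.
Qed.

Lemma lead_coef_map_intr (p : {poly int}) :
  lead_coef (map_poly intr p : {poly algC}) = (lead_coef p)%:~R.
Proof. by rewrite lead_coef_map_inj //; exact: intr_inj. Qed.

Lemma rootsZ_factor (p : {poly int}) : map_poly intr p =
  (lead_coef p)%:~R *: \prod_(z <- rootsZ p) ('X - z%:P) :> {poly algC}.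
Proof.
rewrite /rootsZ; case: closed_field_poly_normal => r /= {1}->.
by rewrite lead_coef_map_intr.
Qed.

Lemma mahlerZ_factor (p : {poly int}) (c : algC) (s : seq algC) : p != 0 ->
    map_poly intr p = c *: \prod_(z <- s) ('X - z%:P) ->
  mahlerZ p = (lead_coef p)%:~R * \prod_(z <- s) Num.max 1 `|z|.
Proof.
move=> p_neq0 Ep; have c_lead : c = (lead_coef p)%:~R.
  by rewrite -lead_coef_map_intr Ep lead_coefZ (monicP (monic_prod_XsubC _ _ _)) mulr1.
have c_neq0 : c != 0 by rewrite c_lead intr_eq0 lead_coef_eq0.
rewrite /mahlerZ; congr (_ * _); apply/perm_big/prod_XsubC_eq/(scalerI c_neq0).
by rewrite -Ep c_lead -rootsZ_factor.
Qed.

Lemma mahlerZM (p q : {poly int}) : p != 0 -> q != 0 ->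
  mahlerZ (p * q) = mahlerZ p * mahlerZ q.
Proof.
move=> p_neq0 q_neq0.
rewrite (@mahlerZ_factor _ ((lead_coef p)%:~R * (lead_coef q)%:~R)
   (rootsZ p ++ rootsZ q)) ?mulf_neq0 //.
  by rewrite /mahlerZ big_cat /= lead_coefM intrM; ring.
rewrite rmorphM /= (rootsZ_factor p) (rootsZ_factor q) big_cat /=.
by rewrite -scalerAl -scalerAr scalerA.
Qed.

Lemma lead_coef_le_mahlerZ (p : {poly int}) : 0 <= lead_coef p ->
  (lead_coef p)%:~R <= mahlerZ p.
Proof.
move=> lead_ge0; rewrite /mahlerZ -{1}[_%:~R]mulr1 ler_wpM2l ?ler0z //.
exact: prod_max1_norm_ge1.
Qed.

Lemma mahlerZ_comp_Xn (q : {poly int}) (L : nat) : (0 < L)%N -> q != 0 ->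
  mahlerZ (q \Po 'X^L) = mahlerZ q.
Proof.
move=> L_gt0 q_neq0.
have lead_comp := lead_coef_comp_Xn q L_gt0.
have comp_neq0 : q \Po 'X^L != 0 by rewrite -lead_coef_eq0 lead_comp lead_coef_eq0.
rewrite (@mahlerZ_factor _ (lead_coef q)%:~R
   (flatten (map (rootsXnsubC L) (rootsZ q)))) //.
  rewrite lead_comp /mahlerZ big_flatten big_map /=; congr (_ * _).
  apply: eq_bigr => d _.
  exact: prod_max1_norm_XnsubC L_gt0 (rootsXnsubC_factor d L_gt0).
rewrite map_comp_poly map_polyXn rootsZ_factor comp_polyZ big_flatten big_map /=.
congr (_ *: _); elim: (rootsZ q) => [|d s IHs]; first by rewrite !big_nil comp_polyC.
rewrite !big_cons comp_polyM IHs -rootsXnsubC_factor //.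
by rewrite comp_polyB comp_polyX comp_polyC.
Qed.

Lemma int_poly_annihilator (g : algC) :
  exists q : {poly int}, q != 0 /\ root (map_poly intr q) g.
Proof.
have [p [Ep p_monic] _] := minCpolyP g.
have [q [a a_neq0 Epq]] := rat_poly_scale p.
have q_neq0 : q != 0.
  by apply: contraTneq (monic_neq0 p_monic) => q0; rewrite Epq q0 rmorph0 scaler0 eqxx.
exists q; split => //; have := root_minCpoly g.
rewrite Ep Epq linearZ /= -map_poly_comp rootE hornerZ mulf_eq0 => /orP[|].
  by rewrite fmorphV rmorph_int invr_eq0 intr_eq0 (negbTE a_neq0).
by rewrite (eq_map_poly (fun x => rmorph_int ratr x)).
Qed.

Lemma exists_least_size_annihilator (g : algC) : exists p : {poly int},
  [/\ p != 0, root (map_poly intr p) g &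
   forall q : {poly int}, q != 0 -> root (map_poly intr q) g -> (size p <= size q)%N].
Proof.
pose annihilated n := exists q : {poly int},
  [/\ q != 0, root (map_poly intr q) g & size q = n].
have [|n [[[p [p_neq0 rp <-]] n_min] _]] :=
  @dec_inh_nat_subset_has_unique_least_element annihilated (fun n => classic _).
  by have [q [q_neq0 rq]] := int_poly_annihilator g; exists (size q), q.
by exists p; split=> // q q_neq0 rq; apply/ssrnat.leP/n_min; exists q.
Qed.

Lemma minpolyZ_spec (g : algC) : is_minpolyZ g (minpolyZ g).
Proof.
apply: epsilon_spec.
have [p [p_neq0 rp p_min]] := exists_least_size_annihilator g.
exists (zprimitive p); split.
- by rewrite zprimitive_eq0.
- move: rp; rewrite {1}(zpolyEprim p) linearZ /= rootE hornerZ mulf_eq0.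
  by rewrite intr_eq0 zcontents_eq0 (negbTE p_neq0).
- by rewrite zcontents_primitive p_neq0.
- by move=> q q_neq0 rq; rewrite size_zprimitive p_min.
Qed.

Lemma lead_coef_minpolyZ_gt0 (g : algC) : 0 < lead_coef (minpolyZ g).
Proof.
have [_ _ contents_1 _] := minpolyZ_spec g.
by rewrite -sgz_gt0 -sgz_contents contents_1.
Qed.

Lemma minpolyZ_dvd (g : algC) (p q : {poly int}) : is_minpolyZ g p -> q != 0 ->
  root (map_poly intr q) g -> exists s, q = p * s.
Proof.
case=> p_neq0 rp contents_1 p_min q_neq0 rq.
have p_dvd_q : p %| q.
  apply/negPn/negP => mod_neq0.
  have root_mod : root (map_poly intr (q %% p)) g.
    move: (congr1 (fun P : {poly int} => (map_poly intr P : {poly algC}).[g])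
      (Pdiv.Idomain.divp_eq q p)).
    rewrite /= !rmorphD !rmorphM /= linearZ /= !hornerE.
    by move: rq rp; rewrite !rootE => /eqP -> /eqP ->; rewrite !mulr0 add0r => <-.
  by have := p_min _ mod_neq0 root_mod; rewrite leqNgt Pdiv.Idomain.ltn_modpN0.
have [s ->] := dvdpP_int p_dvd_q.
by exists s; rewrite {2}(zpolyEprim p) contents_1 scale1r.
Qed.

Lemma M_le_MX (g : algC) (L : nat) : (0 < L)%N -> M g <= M (g ^+ L).
Proof.
move=> L_gt0; rewrite /M; set p := minpolyZ g; set q := minpolyZ (g ^+ L).
have [q_neq0 rq _ _] := minpolyZ_spec (g ^+ L).
have [p_neq0 _ _ _] := minpolyZ_spec g.
have lead_comp := lead_coef_comp_Xn q L_gt0.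
have comp_neq0 : q \Po 'X^L != 0 by rewrite -lead_coef_eq0 lead_comp lead_coef_eq0.
have root_comp : root (map_poly intr (q \Po 'X^L)) g.
  by rewrite map_comp_poly map_polyXn rootE horner_comp hornerXn.
have [s Es] := minpolyZ_dvd (minpolyZ_spec g) comp_neq0 root_comp.
have s_neq0 : s != 0 by apply: contraNneq comp_neq0 => s0; rewrite Es s0 mulr0.
have lead_s_gt0 : 0 < lead_coef s.
  have := lead_coef_minpolyZ_gt0 (g ^+ L).
  by rewrite -/q -lead_comp Es lead_coefM pmulr_rgt0 // lead_coef_minpolyZ_gt0.
rewrite -(mahlerZ_comp_Xn L_gt0 q_neq0) Es mahlerZM // ler_peMr //.
  have lead_p_gt0 := lead_coef_minpolyZ_gt0 g.
  by apply: le_trans (lead_coef_le_mahlerZ (ltW lead_p_gt0)); rewrite ler0z ltW.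
by apply: le_trans (lead_coef_le_mahlerZ (ltW lead_s_gt0)); rewrite ler1z.
Qed.

Theorem mainTheorem5 (alpha : algC) (L : nat) :
  alpha != 0 -> (0 < L)%N -> Mbar_le alpha (alpha ^+ L).
Proof.
move=> _ L_gt0 z' [n [n_gt0 z'n]] eps eps_gt0.
exists (L.-root z'); split.
  by exists (L * n)%N; rewrite muln_gt0 L_gt0 exprM rootCK.
apply: le_lt_trans (M_le_MX _ L_gt0) _.
by rewrite exprMn rootCK // ltrDl.
Qed.
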